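(* Let $L>0$, $N\in\mathbb{N}_+$, $h=L/N$, and let $\epsilon>0$, $\theta_0>0$, $\tau>0$, $\alpha\in(0,1)$. Let $u^n\in\mathcal{C}_{per}$ satisfy $-1<u^n<1$ pointwise. Then the Lagrange function $$\mathcal{L}(u_1,w_1,u_2,w_2,u_3,w_3)=Z_1(u_1,w_1)+Z_2(u_2,w_2)+\langle u_3,u_1-u_2\rangle-\langle w_3,w_1-w_2\rangle$$ has a stationary point, i.e. there exist $u_1^*,w_1^*,u_2^*,w_2^*,u_3^*,w_3^*\in\mathcal{C}_{per}$ with $-1<u_2^*<1$ pointwise such that $$-\epsilon^2\Delta_h u_1^*-\alpha w_1^*+u_3^*=0,\qquad \alpha(-u_1^*+u^n)+\tau\Delta_h w_1^*-w_3^*=0,$$ $$\log(1+u_2^* )-\log(1-u_2^* )-\theta_0u^n-(1-\alpha)w_2^*-u_3^*=0,\qquad (1-\alpha)(-u_2^*+u^n)+w_3^*=0,$$ $$u_1^*-u_2^*=0,\qquad w_1^*-w_2^*=0.$$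
   Context: $\mathcal{C}_{per}$ is the space of real grid functions $\nu=(\nu_{i,j,k})_{i,j,k\in\mathbb{Z}}$ that are $N$-periodic in each index ($\nu_{i,j,k}$ is the value at the cell centre $((i-\frac12)h,(j-\frac12)h,(k-\frac12)h)$ of $(0,L)^3$). Inner product: $\langle\nu,\xi\rangle=h^2\sum_{i,j,k=1}^N\nu_{i,j,k}\xi_{i,j,k}$, $\|\nu\|_2=\langle\nu,\nu\rangle^{1/2}$. Discrete Laplacian: $(\Delta_h\nu)_{i,j,k}=h^{-2}(\nu_{i+1,j,k}+\nu_{i-1,j,k}+\nu_{i,j+1,k}+\nu_{i,j-1,k}+\nu_{i,j,k+1}+\nu_{i,j,k-1}-6\nu_{i,j,k})$. Discrete gradient norm: $\|\nabla_h\nu\|_2^2=h^2\sum_{i,j,k=1}^N h^{-2}\big[(\nu_{i+1,j,k}-\nu_{i,j,k})^2+(\nu_{i,j+1,k}-\nu_{i,j,k})^2+(\nu_{i,j,k+1}-\nu_{i,j,k})^2\big]$. Logarithms, products and inequalities of grid functions are pointwise; $1$ denotes the constant grid function. $Z_1(u,w)=\frac{\epsilon^2}{2}\|\nabla_h u\|_2^2-\alpha\langle u-u^n,w\rangle-\frac{\tau}{2}\|\nabla_h w\|_2^2$ and, for $-1<u<1$ pointwise, $Z_2(u,w)=\langle 1+u,\log(1+u)\rangle+\langle 1-u,\log(1-u)\rangle-\theta_0\langle u^n,u\rangle-(1-\alpha)\langle u-u^n,w\rangle$. The displayed system is the vanishing of all partial gradients of $\mathcal{L}$ (the definition of a stationary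 point). *)

From Stdlib Require Import Reals ZArith.
Open Scope R_scope.

(* A grid function on cell centres, indexed by Z^3.  Membership in C_per
   (N-periodicity in each index) is expressed by [periodic N]. *)
Definition grid := Z -> Z -> Z -> R.

Definition periodic (N : nat) (v : grid) : Prop :=
  forall i j k : Z,
    v (i + Z.of_nat N)%Z j k = v i j k /\
    v i (j + Z.of_nat N)%Z k = v i j k /\
    v i j (k + Z.of_nat N)%Z = v i j k.

Definition lap_h (h : R) (v : grid) (i j k : Z) : R :=
  / (h ^ 2) *
  (v (i + 1)%Z j k + v (i - 1)%Z j k + v i (j + 1)%Z k + v i (j - 1)%Z k
   + v i j (k + 1)%Z + v i j (k - 1)%Z - 6 * v i j k).

From Stdlib Require Import Reals ZArith Lra Lia Classical ClassicalEpsilon FunctionalExtensionality.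
From Coquelicot Require Import Coquelicot.
Open Scope R_scope.

(* With [u1 = u2 = u], [w1 = w2 = w] and [u3], [w3] read off from the first and
   fourth equations, the system reduces to
     [tau lap_h w = u - un]  and  [ln (1 + u) - ln (1 - u) - eps^2 lap_h u - theta0 un = w].
   Parametrise [u = un + tau lap_h W] by a periodic grid [W] and minimise the convex
   energy  [sum entropy u + eps^2/2 |grad u|^2 - theta0 <un, u> + tau/2 |grad W|^2]
   over the [W] with [|u| <= 1].  The last term makes the energy strongly convex
   in [grad W], so a minimising sequence normalised by [W 0 0 0 = 0] converges
   pointwise (a discrete Poincare inequality).  The infinite slope of the entropy
   at [+-1] keeps the minimiser's [u] strictly inside [(-1, 1)], and the first
   variation then gives [lap_h w = lap_h W] for the chemical potential [w] on the
   left of the second equation, so [u] and [w] solve the reduced system. *)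

Lemma ln_le_sub_1 (x : R) : 0 < x -> ln x <= x - 1.
Proof.
  intros Hx. rewrite <- (ln_exp (x - 1)). apply ln_le; [exact Hx|].
  pose proof (exp_ineq1_le (x - 1)). lra.
Qed.

Lemma ln_nonpos (x : R) : x <= 0 -> ln x = 0.
Proof. intros Hx. unfold ln. destruct (Rlt_dec 0 x); [exfalso; lra | reflexivity]. Qed.

(* For [x <= 0] Rocq's [ln x] is [0], so [xlnx] vanishes on the negative axis
   and is continuous everywhere. *)
Definition xlnx (x : R) : R := x * ln x.

Lemma xlnx_0 : xlnx 0 = 0.
Proof. unfold xlnx; ring. Qed.

Lemma xlnx_tangent (a m : R) : 0 <= a -> 0 < m ->
  xlnx m + (a - m) * (ln m + 1) <= xlnx a.
Proof.
  intros Ha Hm. unfold xlnx.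
  destruct (Req_dec a 0) as [->|Ha0]; [ring_simplify; lra|].
  assert (H : ln (m / a) <= m / a - 1) by (apply ln_le_sub_1, Rdiv_lt_0_compat; lra).
  unfold Rdiv in H. rewrite ln_mult, ln_Rinv in H by (try apply Rinv_0_lt_compat; lra).
  assert (a * (ln m - ln a) <= a * (m * / a - 1)) by (apply Rmult_le_compat_l; lra).
  assert (a * (m * / a - 1) = m - a) by (field; lra).
  nra.
Qed.

Lemma xlnx_convex (a b t : R) : 0 <= a -> 0 <= b -> 0 <= t <= 1 ->
  xlnx ((1 - t) * a + t * b) <= (1 - t) * xlnx a + t * xlnx b.
Proof.
  intros Ha Hb Ht. set (z := (1 - t) * a + t * b).
  destruct (Req_dec z 0) as [Hz|Hz].
  - assert (Ea : (1 - t) * a = 0) by (unfold z in Hz; nra).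
    assert (Eb : t * b = 0) by (unfold z in Hz; nra).
    rewrite Hz, xlnx_0. unfold xlnx.
    replace ((1 - t) * (a * ln a) + t * (b * ln b))
      with ((1 - t) * a * ln a + t * b * ln b) by ring.
    rewrite Ea, Eb. lra.
  - assert (Hz' : 0 < z) by (unfold z in *; nra).
    pose proof (xlnx_tangent a z Ha Hz'). pose proof (xlnx_tangent b z Hb Hz').
    assert ((1 - t) * (xlnx z + (a - z) * (ln z + 1)) <= (1 - t) * xlnx a)
      by (apply Rmult_le_compat_l; lra).
    assert (t * (xlnx z + (b - z) * (ln z + 1)) <= t * xlnx b)
      by (apply Rmult_le_compat_l; lra).
    assert ((1 - t) * (xlnx z + (a - z) * (ln z + 1)) + t * (xlnx z + (b - z) * (ln z + 1))
            = xlnx z) by (unfold z; ring).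
    lra.
Qed.

Lemma xlnx_ge (a : R) : 0 <= a -> a - 1 <= xlnx a.
Proof.
  intros Ha. pose proof (xlnx_tangent a 1 Ha Rlt_0_1) as H.
  unfold xlnx in *. rewrite ln_1 in H. lra.
Qed.

Lemma Rabs_xlnx_le (x : R) : 0 < x <= 1 -> Rabs (xlnx x) <= 2 * sqrt x.
Proof.
  intros Hx. unfold xlnx.
  assert (Hs : 0 < sqrt x) by (apply sqrt_lt_R0; lra).
  assert (Hl : ln x <= 0) by (rewrite <- ln_1; apply ln_le; lra).
  assert (H : ln (/ sqrt x) <= / sqrt x - 1) by (apply ln_le_sub_1, Rinv_0_lt_compat; lra).
  rewrite ln_Rinv in H by lra.
  assert (Hxs : x = sqrt x * sqrt x) by (rewrite sqrt_sqrt; lra).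
  assert (ln x = 2 * ln (sqrt x)) by (rewrite Hxs at 1; rewrite ln_mult by lra; ring).
  assert (x * - ln (sqrt x) <= x * / sqrt x) by (apply Rmult_le_compat_l; lra).
  assert (x * / sqrt x = sqrt x) by (rewrite Hxs at 1; field; lra).
  rewrite Rabs_left1 by nra. nra.
Qed.

Lemma xlnx_continuous (x : R) : continuity_pt xlnx x.
Proof.
  destruct (Rlt_le_dec 0 x) as [Hx|Hx].
  { apply continuity_pt_mult; [apply continuity_pt_id|].
    apply derivable_continuous_pt. exists (/ x). now apply derivable_pt_lim_ln. }
  destruct (Rlt_le_dec x 0) as [Hneg|H0].
  - intros e He. exists (- x). split; [lra|].
    intros y [_ Hy]. simpl in *. unfold R_dist in *.
    assert (y < 0) by (apply Rabs_def2 in Hy; lra).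
    unfold xlnx. rewrite (ln_nonpos x), (ln_nonpos y) by lra.
    rewrite !Rmult_0_r, Rminus_0_r, Rabs_R0. exact He.
  - assert (x = 0) by lra. subst x.
    intros e He. exists (Rmin 1 ((e / 2) * (e / 2))). split; [apply Rmin_pos; nra|].
    intros y [_ Hy]. simpl in *. unfold R_dist in *.
    rewrite xlnx_0, Rminus_0_r. rewrite Rminus_0_r in Hy.
    destruct (Rle_dec y 0).
    + unfold xlnx. rewrite ln_nonpos, Rmult_0_r, Rabs_R0 by lra. exact He.
    + rewrite Rabs_right in Hy by lra.
      pose proof (Rmin_l 1 ((e / 2) * (e / 2))). pose proof (Rmin_r 1 ((e / 2) * (e / 2))).
      pose proof (Rabs_xlnx_le y ltac:(lra)).
      assert (sqrt y < e / 2).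
      { rewrite <- (sqrt_square (e / 2)) by lra. apply sqrt_lt_1; nra. }
      lra.
Qed.

Definition entropy (s : R) : R := xlnx (1 + s) + xlnx (1 - s).

Definition dentropy (s : R) : R := ln (1 + s) - ln (1 - s).

Lemma entropy_opp (s : R) : entropy (- s) = entropy s.
Proof. unfold entropy. replace (1 + - s) with (1 - s) by ring.
  replace (1 - - s) with (1 + s) by ring. ring. Qed.

Lemma entropy_convex (p q t : R) : -1 <= p <= 1 -> -1 <= q <= 1 -> 0 <= t <= 1 ->
  entropy ((1 - t) * p + t * q) <= (1 - t) * entropy p + t * entropy q.
Proof.
  intros Hp Hq Ht. unfold entropy.
  replace (1 + ((1 - t) * p + t * q)) with ((1 - t) * (1 + p) + t * (1 + q)) by ring.
  replace (1 - ((1 - t) * p + t * q)) with ((1 - t) * (1 - p) + t * (1 - q)) by ring.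
  pose proof (xlnx_convex (1 + p) (1 + q) t ltac:(lra) ltac:(lra) Ht).
  pose proof (xlnx_convex (1 - p) (1 - q) t ltac:(lra) ltac:(lra) Ht).
  lra.
Qed.

Lemma entropy_nonneg (s : R) : -1 <= s <= 1 -> 0 <= entropy s.
Proof.
  intros Hs. unfold entropy.
  pose proof (xlnx_ge (1 + s) ltac:(lra)). pose proof (xlnx_ge (1 - s) ltac:(lra)). lra.
Qed.

Lemma entropy_continuous (s : R) : continuity_pt entropy s.
Proof.
  apply continuity_pt_plus.
  - apply (continuity_pt_comp (fun s => 1 + s) xlnx); [|apply xlnx_continuous].
    apply continuity_pt_plus; [apply continuity_pt_const; now intros ? ? | apply continuity_pt_id].
  - apply (continuity_pt_comp (fun s => 1 - s) xlnx); [|apply xlnx_continuous].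
    apply continuity_pt_minus; [apply continuity_pt_const; now intros ? ? | apply continuity_pt_id].
Qed.

Lemma entropy_derivative (a b : R) : -1 < a < 1 ->
  derivable_pt_lim (fun t => entropy (a + t * b)) 0 (dentropy a * b).
Proof.
  intros Ha. apply is_derive_Reals. unfold entropy, xlnx, dentropy.
  auto_derive.
  - repeat split; lra.
  - replace (a + 0 * b) with a by ring. replace (1 + - a) with (1 - a) by ring. field; lra.
Qed.

Lemma entropy_chord_at_minus1 (u0 t : R) : -1 < u0 < 1 -> 0 < t <= 1 ->
  entropy ((1 - t) * -1 + t * u0) <= (1 - t) * entropy (-1) + t * entropy u0
    + t * ((1 + u0) * ln (t * (1 + u0)) + xlnx (1 - u0) - entropy u0).
Proof.
  intros Hu Ht. set (a := 1 + u0).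
  pose proof (xlnx_convex 2 (2 - a) t ltac:(lra) ltac:(unfold a; lra) ltac:(lra)) as H.
  replace ((1 - t) * 2 + t * (2 - a)) with (2 - t * a) in H by ring.
  replace (2 - a) with (1 - u0) in H by (unfold a; ring).
  unfold entropy. replace (1 + -1) with 0 by ring. replace (1 - -1) with 2 by ring.
  replace (1 + ((1 - t) * -1 + t * u0)) with (t * a) by (unfold a; ring).
  replace (1 - ((1 - t) * -1 + t * u0)) with (2 - t * a) by (unfold a; ring).
  rewrite xlnx_0. unfold xlnx at 1. lra.
Qed.

Lemma entropy_chord_at_boundary (s u0 : R) : (s = -1 \/ s = 1) -> -1 < u0 < 1 ->
  exists a K, 0 < a /\ forall t, 0 < t <= 1 ->
    entropy ((1 - t) * s + t * u0) <= (1 - t) * entropy s + t * entropy u0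
      + t * (a * ln (t * a) + K).
Proof.
  intros [-> | ->] Hu.
  - exists (1 + u0), (xlnx (1 - u0) - entropy u0). split; [lra|].
    intros t Ht. pose proof (entropy_chord_at_minus1 u0 t Hu Ht). lra.
  - exists (1 - u0), (xlnx (1 + u0) - entropy u0). split; [lra|].
    intros t Ht. pose proof (entropy_chord_at_minus1 (- u0) t ltac:(lra) Ht) as H.
    replace (1 + - u0) with (1 - u0) in H by ring. replace (1 - - u0) with (1 + u0) in H by ring.
    rewrite entropy_opp in H.
    replace ((1 - t) * -1 + t * - u0) with (- ((1 - t) * 1 + t * u0)) in H by ring.
    rewrite entropy_opp in H.
    assert (entropy (-1) = entropy 1) by (rewrite <- (entropy_opp 1); f_equal; ring).
    rewrite H0 in H. lra.
Qed.

Fixpoint zsum (n : nat) (f : Z -> R) : R :=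
  match n with O => 0 | S m => zsum m f + f (Z.of_nat m) end.

Definition in_cell (N : nat) (i : Z) : Prop := (0 <= i < Z.of_nat N)%Z.

Lemma zsum_ext (n : nat) (f g : Z -> R) :
  (forall i, in_cell n i -> f i = g i) -> zsum n f = zsum n g.
Proof.
  induction n as [|n IH]; intros H; simpl; [reflexivity|].
  rewrite IH, H; [reflexivity | unfold in_cell; lia | intros i Hi; apply H; unfold in_cell in *; lia].
Qed.

Lemma zsum_plus (n : nat) (f g : Z -> R) :
  zsum n (fun i => f i + g i) = zsum n f + zsum n g.
Proof. induction n; simpl; [ring | rewrite IHn; ring]. Qed.

Lemma zsum_scal (n : nat) (c : R) (f : Z -> R) :
  zsum n (fun i => c * f i) = c * zsum n f.
Proof. induction n; simpl; [ring | rewrite IHn; ring]. Qed.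

Lemma zsum_le (n : nat) (f g : Z -> R) :
  (forall i, in_cell n i -> f i <= g i) -> zsum n f <= zsum n g.
Proof.
  induction n as [|n IH]; intros H; simpl; [lra|].
  pose proof (H (Z.of_nat n) ltac:(unfold in_cell; lia)).
  pose proof (IH ltac:(intros i Hi; apply H; unfold in_cell in *; lia)). lra.
Qed.

Lemma zsum_nonneg (n : nat) (f : Z -> R) :
  (forall i, in_cell n i -> 0 <= f i) -> 0 <= zsum n f.
Proof.
  induction n as [|n IH]; intros H; simpl; [lra|].
  pose proof (H (Z.of_nat n) ltac:(unfold in_cell; lia)).
  pose proof (IH ltac:(intros i Hi; apply H; unfold in_cell in *; lia)). lra.
Qed.

Lemma zsum_term_le (n : nat) (f : Z -> R) (i0 : Z) :
  (forall i, in_cell n i -> 0 <= f i) -> in_cell n i0 -> f i0 <= zsum n f.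
Proof.
  induction n as [|n IH]; intros H Hi0; simpl; [unfold in_cell in *; lia|].
  assert (Hn : 0 <= f (Z.of_nat n)) by (apply H; unfold in_cell; lia).
  assert (Hf : forall i, in_cell n i -> 0 <= f i) by (intros i Hi; apply H; unfold in_cell in *; lia).
  destruct (Z.eq_dec i0 (Z.of_nat n)) as [->|Hne].
  - pose proof (zsum_nonneg n f Hf). lra.
  - pose proof (IH Hf ltac:(unfold in_cell in *; lia)). lra.
Qed.

Lemma zsum_shift1 (n : nat) (f : Z -> R) :
  f (Z.of_nat n) = f 0%Z -> zsum n (fun i => f (i + 1)%Z) = zsum n f.
Proof.
  intros Hper. enough (E : zsum n (fun i => f (i + 1)%Z) = zsum n f + f (Z.of_nat n) - f 0%Z)
    by (rewrite E, Hper; ring).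
  clear Hper. induction n as [|n IH]; cbn [zsum]; [simpl; ring|].
  rewrite IH, Nat2Z.inj_succ, Z.add_1_r. ring.
Qed.

Lemma zsum_lim (n : nat) (f : nat -> Z -> R) (l : Z -> R) :
  (forall i, is_lim_seq (fun m => f m i) (l i)) ->
  is_lim_seq (fun m => zsum n (f m)) (zsum n l).
Proof.
  intros H. induction n as [|n IH]; simpl.
  - apply is_lim_seq_const.
  - apply is_lim_seq_plus'; [exact IH | apply H].
Qed.

Lemma zsum_derivative (n : nat) (g : Z -> R -> R) (g' : Z -> R) (x : R) :
  (forall i, derivable_pt_lim (g i) x (g' i)) ->
  derivable_pt_lim (fun t => zsum n (fun i => g i t)) x (zsum n g').
Proof.
  intros H. induction n as [|n IH]; simpl.
  - apply derivable_pt_lim_const.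
  - apply (derivable_pt_lim_plus (fun t => zsum n (fun i => g i t)) (g (Z.of_nat n))); auto.
Qed.

Definition csum (N : nat) (f : grid) : R :=
  zsum N (fun i => zsum N (fun j => zsum N (fun k => f i j k))).

Section CellSum.
Variable N : nat.

Lemma csum_ext (f g : grid) :
  (forall i j k, in_cell N i -> in_cell N j -> in_cell N k -> f i j k = g i j k) ->
  csum N f = csum N g.
Proof.
  intros H. apply zsum_ext; intros i Hi. apply zsum_ext; intros j Hj.
  apply zsum_ext; intros k Hk. auto.
Qed.

Lemma csum_plus (f g : grid) :
  csum N (fun i j k => f i j k + g i j k) = csum N f + csum N g.
Proof.
  unfold csum. rewrite <- zsum_plus. apply zsum_ext; intros i _.
  rewrite <- zsum_plus. apply zsum_ext; intros j _. apply zsum_plus.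
Qed.

Lemma csum_scal (c : R) (f : grid) :
  csum N (fun i j k => c * f i j k) = c * csum N f.
Proof.
  unfold csum. rewrite <- zsum_scal. apply zsum_ext; intros i _.
  rewrite <- zsum_scal. apply zsum_ext; intros j _. apply zsum_scal.
Qed.

Lemma csum_minus (f g : grid) :
  csum N (fun i j k => f i j k - g i j k) = csum N f - csum N g.
Proof.
  rewrite (csum_ext _ (fun i j k => f i j k + (-1) * g i j k)) by (intros; ring).
  rewrite csum_plus, csum_scal. ring.
Qed.

Lemma csum_le (f g : grid) :
  (forall i j k, in_cell N i -> in_cell N j -> in_cell N k -> f i j k <= g i j k) ->
  csum N f <= csum N g.
Proof.
  intros H. apply zsum_le; intros i Hi. apply zsum_le; intros j Hj.
  apply zsum_le; intros k Hk. auto.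
Qed.

Lemma csum_nonneg (f : grid) :
  (forall i j k, in_cell N i -> in_cell N j -> in_cell N k -> 0 <= f i j k) ->
  0 <= csum N f.
Proof.
  intros H. apply zsum_nonneg; intros i Hi. apply zsum_nonneg; intros j Hj.
  apply zsum_nonneg; intros k Hk. auto.
Qed.

Lemma csum_term_le (f : grid) (i0 j0 k0 : Z) :
  (forall i j k, in_cell N i -> in_cell N j -> in_cell N k -> 0 <= f i j k) ->
  in_cell N i0 -> in_cell N j0 -> in_cell N k0 -> f i0 j0 k0 <= csum N f.
Proof.
  intros H Hi Hj Hk. unfold csum.
  eapply Rle_trans; [|apply (zsum_term_le _ _ i0); [|exact Hi]].
  2: { intros i Hi'. apply zsum_nonneg; intros j Hj'. apply zsum_nonneg; auto. }
  eapply Rle_trans; [|apply (zsum_term_le _ _ j0); [|exact Hj]].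
  2: { intros j Hj'. apply zsum_nonneg; auto. }
  apply (zsum_term_le _ (fun k => f i0 j0 k)); auto.
Qed.

Lemma csum_le_add_term (f g : grid) (i0 j0 k0 : Z) (d : R) :
  (forall i j k, in_cell N i -> in_cell N j -> in_cell N k -> f i j k <= g i j k) ->
  in_cell N i0 -> in_cell N j0 -> in_cell N k0 -> f i0 j0 k0 <= g i0 j0 k0 + d ->
  csum N f <= csum N g + d.
Proof.
  intros H Hi Hj Hk H0.
  pose proof (csum_term_le (fun i j k => g i j k - f i j k) i0 j0 k0
                ltac:(intros i j k Hi' Hj' Hk'; pose proof (H i j k Hi' Hj' Hk'); lra) Hi Hj Hk).
  rewrite csum_minus in H1. lra.
Qed.

Lemma csum_lim (f : nat -> grid) (l : grid) :
  (forall i j k, is_lim_seq (fun m => f m i j k) (l i j k)) ->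
  is_lim_seq (fun m => csum N (f m)) (csum N l).
Proof.
  intros H. apply (zsum_lim N (fun m i => zsum N (fun j => zsum N (fun k => f m i j k)))).
  intros i. apply (zsum_lim N (fun m j => zsum N (fun k => f m i j k))).
  intros j. apply (zsum_lim N (fun m k => f m i j k)). auto.
Qed.

Lemma csum_derivative (g : Z -> Z -> Z -> R -> R) (g' : grid) (x : R) :
  (forall i j k, derivable_pt_lim (g i j k) x (g' i j k)) ->
  derivable_pt_lim (fun t => csum N (fun i j k => g i j k t)) x (csum N g').
Proof.
  intros H. apply (zsum_derivative N (fun i t => zsum N (fun j => zsum N (fun k => g i j k t)))).
  intros i. apply (zsum_derivative N (fun j t => zsum N (fun k => g i j k t))).
  intros j. apply (zsum_derivative N (fun k t => g i j k t)). auto.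
Qed.

End CellSum.

Lemma Z_periodic_mult {A : Type} (f : Z -> A) (n : Z) :
  (forall i, f (i + n)%Z = f i) -> forall q i, f (i + n * q)%Z = f i.
Proof.
  intros Hf q. induction q as [|q IH|q IH] using Z.peano_ind; intros i.
  - now rewrite Z.mul_0_r, Z.add_0_r.
  - rewrite <- (IH i), <- (Hf (i + n * q)%Z). f_equal. lia.
  - rewrite <- (IH i), <- (Hf (i + n * Z.pred q)%Z). f_equal. lia.
Qed.

Lemma Z_periodic_mod {A : Type} (f : Z -> A) (n : Z) :
  (0 < n)%Z -> (forall i, f (i + n)%Z = f i) -> forall i, f i = f (i mod n)%Z.
Proof.
  intros Hn Hf i. rewrite <- (Z_periodic_mult f n Hf (i / n) (i mod n)).
  f_equal. rewrite Z.add_comm. apply Z.div_mod. lia.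
Qed.

Section Periodic.
Variable N : nat.
Hypothesis HN : (0 < N)%nat.

Lemma in_cell_mod (i : Z) : in_cell N (i mod Z.of_nat N).
Proof. unfold in_cell. apply Z.mod_pos_bound. lia. Qed.

Lemma periodic_mod (v : grid) : periodic N v -> forall i j k,
  v i j k = v (i mod Z.of_nat N)%Z (j mod Z.of_nat N)%Z (k mod Z.of_nat N)%Z.
Proof.
  intros Hv i j k. assert (HN' : (0 < Z.of_nat N)%Z) by lia.
  rewrite (Z_periodic_mod (fun i => v i j k) _ HN' (fun i => proj1 (Hv i j k))).
  rewrite (Z_periodic_mod (fun j => v _ j k) _ HN' (fun j => proj1 (proj2 (Hv _ j k)))).
  rewrite (Z_periodic_mod (fun k => v _ _ k) _ HN' (fun k => proj2 (proj2 (Hv _ _ k)))).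
  reflexivity.
Qed.

Lemma periodic_forall_of_cell (P : R -> Prop) (v : grid) : periodic N v ->
  (forall i j k, in_cell N i -> in_cell N j -> in_cell N k -> P (v i j k)) ->
  forall i j k, P (v i j k).
Proof. intros Hv H i j k. rewrite (periodic_mod v Hv). apply H; apply in_cell_mod. Qed.

Lemma periodic_bounded (v : grid) : periodic N v ->
  exists B, 0 < B /\ forall i j k, Rabs (v i j k) <= B.
Proof.
  intros Hv. exists (1 + csum N (fun i j k => Rabs (v i j k))). split.
  - pose proof (csum_nonneg N (fun i j k => Rabs (v i j k)) ltac:(intros; apply Rabs_pos)). lra.
  - apply (periodic_forall_of_cell (fun x => Rabs x <= _)); [exact Hv|].
    intros i j k Hi Hj Hk.
    pose proof (csum_term_le N (fun i j k => Rabs (v i j k)) i j k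
                  ltac:(intros; apply Rabs_pos) Hi Hj Hk). lra.
Qed.

End Periodic.

Section PeriodicClosure.
Variable N : nat.

Lemma periodic_map1 (op : R -> R) (a : grid) :
  periodic N a -> periodic N (fun i j k => op (a i j k)).
Proof. intros H i j k. destruct (H i j k) as (H1 & H2 & H3). now rewrite H1, H2, H3. Qed.

Lemma periodic_map2 (op : R -> R -> R) (a b : grid) :
  periodic N a -> periodic N b -> periodic N (fun i j k => op (a i j k) (b i j k)).
Proof.
  intros Ha Hb i j k. destruct (Ha i j k) as (A1 & A2 & A3).
  destruct (Hb i j k) as (B1 & B2 & B3). now rewrite A1, A2, A3, B1, B2, B3.
Qed.

Lemma periodic_const (c : R) : periodic N (fun _ _ _ => c).
Proof. now intros i j k. Qed.

Lemma periodic_reindex (fi fj fk : Z -> Z) (v : grid) :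
  (forall i, fi (i + Z.of_nat N) = fi i + Z.of_nat N)%Z ->
  (forall j, fj (j + Z.of_nat N) = fj j + Z.of_nat N)%Z ->
  (forall k, fk (k + Z.of_nat N) = fk k + Z.of_nat N)%Z ->
  periodic N v -> periodic N (fun i j k => v (fi i) (fj j) (fk k)).
Proof.
  intros Hi Hj Hk Hv i j k. rewrite Hi, Hj, Hk. apply Hv.
Qed.

Lemma periodic_lap (h : R) (v : grid) : periodic N v -> periodic N (lap_h h v).
Proof.
  intros Hv i j k. unfold lap_h.
  assert (E1 : forall i j k, v (i + Z.of_nat N)%Z j k = v i j k) by apply Hv.
  assert (E2 : forall i j k, v i (j + Z.of_nat N)%Z k = v i j k) by apply Hv.
  assert (E3 : forall i j k, v i j (k + Z.of_nat N)%Z = v i j k) by apply Hv.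
  repeat split.
  - replace (i + Z.of_nat N + 1)%Z with (i + 1 + Z.of_nat N)%Z by lia.
    replace (i + Z.of_nat N - 1)%Z with (i - 1 + Z.of_nat N)%Z by lia.
    now rewrite !E1.
  - replace (j + Z.of_nat N + 1)%Z with (j + 1 + Z.of_nat N)%Z by lia.
    replace (j + Z.of_nat N - 1)%Z with (j - 1 + Z.of_nat N)%Z by lia.
    now rewrite !E2.
  - replace (k + Z.of_nat N + 1)%Z with (k + 1 + Z.of_nat N)%Z by lia.
    replace (k + Z.of_nat N - 1)%Z with (k - 1 + Z.of_nat N)%Z by lia.
    now rewrite !E3.
Qed.

Lemma csum_translate_i (F : grid) : periodic N F ->
  csum N (fun i j k => F (i + 1)%Z j k) = csum N F.
Proof.
  intros HF. apply (zsum_shift1 N (fun i => zsum N (fun j => zsum N (fun k => F i j k)))).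
  apply zsum_ext; intros j _. apply zsum_ext; intros k _.
  rewrite <- (Z.add_0_l (Z.of_nat N)). apply HF.
Qed.

Lemma csum_translate_j (F : grid) : periodic N F ->
  csum N (fun i j k => F i (j + 1)%Z k) = csum N F.
Proof.
  intros HF. apply zsum_ext; intros i _.
  apply (zsum_shift1 N (fun j => zsum N (fun k => F i j k))).
  apply zsum_ext; intros k _. rewrite <- (Z.add_0_l (Z.of_nat N)). apply HF.
Qed.

Lemma csum_translate_k (F : grid) : periodic N F ->
  csum N (fun i j k => F i j (k + 1)%Z) = csum N F.
Proof.
  intros HF. apply zsum_ext; intros i _. apply zsum_ext; intros j _.
  apply (zsum_shift1 N (fun k => F i j k)). rewrite <- (Z.add_0_l (Z.of_nat N)). apply HF.
Qed.

End PeriodicClosure.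

Definition comb (t : R) (a b : grid) : grid := fun i j k => (1 - t) * a i j k + t * b i j k.

Definition perturb (w psi : grid) (t : R) : grid := fun i j k => w i j k + t * psi i j k.

Definition gsub (a b : grid) : grid := fun i j k => a i j k - b i j k.

Definition grad_prod (a b : grid) (i j k : Z) : R :=
  (a (i + 1)%Z j k - a i j k) * (b (i + 1)%Z j k - b i j k)
  + (a i (j + 1)%Z k - a i j k) * (b i (j + 1)%Z k - b i j k)
  + (a i j (k + 1)%Z - a i j k) * (b i j (k + 1)%Z - b i j k).

Definition dirichlet (N : nat) (h : R) (a b : grid) : R := / h ^ 2 * csum N (grad_prod a b).

Lemma Rabs_walk_le (f : Z -> R) (M : R) (n : nat) :
  (forall m : nat, (m < n)%nat -> Rabs (f (Z.of_nat m + 1)%Z - f (Z.of_nat m)) <= M) ->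
  Rabs (f (Z.of_nat n) - f 0%Z) <= INR n * M.
Proof.
  induction n as [|n IH]; intros Hf.
  - simpl. unfold Rminus. rewrite Rplus_opp_r, Rabs_R0. lra.
  - rewrite Nat2Z.inj_succ, <- Z.add_1_r, S_INR.
    pose proof (Rabs_triang (f (Z.of_nat n + 1)%Z - f (Z.of_nat n)) (f (Z.of_nat n) - f 0%Z)).
    replace (f (Z.of_nat n + 1)%Z - f (Z.of_nat n) + (f (Z.of_nat n) - f 0%Z))
      with (f (Z.of_nat n + 1)%Z - f 0%Z) in H by ring.
    pose proof (Hf n (Nat.lt_succ_diag_r n)).
    pose proof (IH (fun m Hm => Hf m (Nat.lt_lt_succ_r _ _ Hm))). lra.
Qed.

Section Dirichlet.
Variable N : nat.
Variable h : R.
Hypothesis Hh : h <> 0.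

Local Notation D := (dirichlet N h).

Lemma dirichlet_sym (a b : grid) : D a b = D b a.
Proof. unfold dirichlet, grad_prod. f_equal. apply csum_ext; intros; ring. Qed.

Lemma sqr_h_pos : 0 < h ^ 2.
Proof. replace (h ^ 2) with (h²) by (unfold Rsqr; ring). now apply Rsqr_pos_lt. Qed.

Lemma grad_prod_self_nonneg (v : grid) (i j k : Z) : 0 <= grad_prod v v i j k.
Proof.
  unfold grad_prod.
  pose proof (Rle_0_sqr (v (i + 1)%Z j k - v i j k)).
  pose proof (Rle_0_sqr (v i (j + 1)%Z k - v i j k)).
  pose proof (Rle_0_sqr (v i j (k + 1)%Z - v i j k)). unfold Rsqr in *. lra.
Qed.

Lemma dirichlet_nonneg (v : grid) : 0 <= D v v.
Proof.
  apply Rmult_le_pos.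
  - apply Rlt_le, Rinv_0_lt_compat, sqr_h_pos.
  - apply csum_nonneg. intros. apply grad_prod_self_nonneg.
Qed.

Lemma dirichlet_sub_const (v : grid) (c : R) :
  D (fun i j k => v i j k - c) (fun i j k => v i j k - c) = D v v.
Proof. unfold dirichlet, grad_prod. f_equal. apply csum_ext; intros; ring. Qed.

Lemma dirichlet_comb (t : R) (p q : grid) :
  D (comb t p q) (comb t p q)
  = (1 - t) * D p p + t * D q q - t * (1 - t) * D (gsub p q) (gsub p q).
Proof.
  unfold dirichlet.
  rewrite (csum_ext N (grad_prod (comb t p q) (comb t p q)) (fun i j k =>
    (1 - t) * grad_prod p p i j k + t * grad_prod q q i j k
    - t * (1 - t) * grad_prod (gsub p q) (gsub p q) i j k))
    by (intros; unfold grad_prod, comb, gsub; ring).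
  rewrite csum_minus, csum_plus, !csum_scal. ring.
Qed.

Lemma dirichlet_perturb (p r : grid) (t : R) :
  D (perturb p r t) (perturb p r t) = D p p + 2 * t * D p r + t ^ 2 * D r r.
Proof.
  unfold dirichlet.
  rewrite (csum_ext N (grad_prod (perturb p r t) (perturb p r t)) (fun i j k =>
    grad_prod p p i j k + 2 * t * grad_prod p r i j k + t ^ 2 * grad_prod r r i j k))
    by (intros; unfold grad_prod, perturb; ring).
  rewrite !csum_plus, !csum_scal. ring.
Qed.

Lemma dirichlet_lim (w : nat -> grid) (W : grid) :
  (forall i j k, is_lim_seq (fun n => w n i j k) (W i j k)) ->
  is_lim_seq (fun n => D (w n) (w n)) (D W W).
Proof.
  intros H. apply (is_lim_seq_scal_l _ (/ h ^ 2) (csum N (grad_prod W W))).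
  apply csum_lim. intros i j k. unfold grad_prod.
  repeat apply is_lim_seq_plus'; apply is_lim_seq_mult'; apply is_lim_seq_minus'; apply H.
Qed.

(* Summation by parts: each difference quotient is moved onto [b] by a
   translation of the periodic sums, which turns [grad_prod] into [- a * lap_h b]. *)
Lemma green_formula (a b : grid) : periodic N a -> periodic N b ->
  D a b = - csum N (fun i j k => a i j k * lap_h h b i j k).
Proof.
  intros Ha Hb.
  set (P := fun i j k => a i j k * b i j k).
  set (G1 := fun i j k => a i j k * b (i - 1)%Z j k).
  set (G2 := fun i j k => a i j k * b i (j - 1)%Z k).
  set (G3 := fun i j k => a i j k * b i j (k - 1)%Z).
  assert (HP : periodic N P) by (apply periodic_map2; auto).
  assert (HG1 : periodic N G1).
  { apply periodic_map2; [exact Ha|].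
    apply (periodic_reindex N (fun i => i - 1)%Z (fun j => j) (fun k => k)); auto; intros; lia. }
  assert (HG2 : periodic N G2).
  { apply periodic_map2; [exact Ha|].
    apply (periodic_reindex N (fun i => i) (fun j => j - 1)%Z (fun k => k)); auto; intros; lia. }
  assert (HG3 : periodic N G3).
  { apply periodic_map2; [exact Ha|].
    apply (periodic_reindex N (fun i => i) (fun j => j) (fun k => k - 1)%Z); auto; intros; lia. }
  unfold dirichlet.
  rewrite (csum_ext N (grad_prod a b) (fun i j k => (- h ^ 2) * (a i j k * lap_h h b i j k)
     + (((P (i + 1)%Z j k - P i j k) + (P i (j + 1)%Z k - P i j k)) + (P i j (k + 1)%Z - P i j k))
     - (((G1 (i + 1)%Z j k - G1 i j k) + (G2 i (j + 1)%Z k - G2 i j k))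
        + (G3 i j (k + 1)%Z - G3 i j k)))).
  - rewrite csum_minus, csum_plus, csum_scal, !csum_plus, !csum_minus.
    rewrite csum_translate_i, csum_translate_j, csum_translate_k by assumption.
    rewrite csum_translate_i, csum_translate_j, csum_translate_k by assumption.
    field. exact Hh.
  - intros i j k _ _ _. unfold P, G1, G2, G3, lap_h, grad_prod.
    rewrite !Z.add_simpl_r. field. exact Hh.
Qed.

Lemma csum_mul_lap_sym (a b : grid) : periodic N a -> periodic N b ->
  csum N (fun i j k => a i j k * lap_h h b i j k) = csum N (fun i j k => lap_h h a i j k * b i j k).
Proof.
  intros Ha Hb. assert (E : D a b = D b a) by apply dirichlet_sym.
  rewrite (green_formula a b Ha Hb), (green_formula b a Hb Ha) in E.
  rewrite (csum_ext N (fun i j k => lap_h h a i j k * b i j k)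
                      (fun i j k => b i j k * lap_h h a i j k)) by (intros; ring).
  lra.
Qed.

Lemma Rabs_step_le_dirichlet (v : grid) (M : R) (i j k : Z) :
  0 <= M -> h ^ 2 * D v v <= M ^ 2 -> in_cell N i -> in_cell N j -> in_cell N k ->
  Rabs (v (i + 1)%Z j k - v i j k) <= M /\ Rabs (v i (j + 1)%Z k - v i j k) <= M
  /\ Rabs (v i j (k + 1)%Z - v i j k) <= M.
Proof.
  intros HM HD Hi Hj Hk.
  assert (Hsum : h ^ 2 * D v v = csum N (grad_prod v v)) by (unfold dirichlet; field; exact Hh).
  pose proof (csum_term_le N (grad_prod v v) i j k
                (fun i j k _ _ _ => grad_prod_self_nonneg v i j k) Hi Hj Hk) as Hterm.
  assert (Hsqr : forall x, x * x <= M ^ 2 -> Rabs x <= M).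
  { intros x Hx. rewrite <- (Rabs_right M) by lra. apply Rsqr_le_abs_0. unfold Rsqr. lra. }
  rewrite <- Hsum in Hterm. unfold grad_prod in Hterm.
  pose proof (Rle_0_sqr (v (i + 1)%Z j k - v i j k)).
  pose proof (Rle_0_sqr (v i (j + 1)%Z k - v i j k)).
  pose proof (Rle_0_sqr (v i j (k + 1)%Z - v i j k)). unfold Rsqr in *.
  repeat split; apply Hsqr; lra.
Qed.

Section Poincare.
Hypothesis HN : (0 < N)%nat.

(* A discrete Poincare inequality: walk inside the cell from the origin to any
   cell point in at most [3 N] unit steps. *)
Lemma Rabs_le_dirichlet (v : grid) (M : R) :
  periodic N v -> v 0%Z 0%Z 0%Z = 0 -> 0 <= M -> h ^ 2 * D v v <= M ^ 2 ->
  forall i j k, Rabs (v i j k) <= 3 * INR N * M.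
Proof.
  intros Hv H0 HM HD.
  apply (periodic_forall_of_cell N HN (fun x => Rabs x <= 3 * INR N * M) v Hv).
  intros i j k Hi Hj Hk.
  assert (H0N : in_cell N 0) by (unfold in_cell; lia).
  assert (HmN : forall (m : nat) (x : Z), (m < Z.to_nat x)%nat -> in_cell N x -> in_cell N (Z.of_nat m))
    by (unfold in_cell; lia).
  unfold in_cell in Hi, Hj, Hk.
  rewrite <- (Z2Nat.id i), <- (Z2Nat.id j), <- (Z2Nat.id k) by lia.
  set (a := Z.to_nat i) in *. set (b := Z.to_nat j) in *. set (c := Z.to_nat k) in *.
  assert (HaN : in_cell N (Z.of_nat a)) by (unfold a, in_cell; lia).
  assert (HbN : in_cell N (Z.of_nat b)) by (unfold b, in_cell; lia).
  pose proof (Rabs_walk_le (fun x => v x 0%Z 0%Z) M a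
    (fun m Hm => proj1 (Rabs_step_le_dirichlet v M _ _ _ HM HD (HmN m i Hm Hi) H0N H0N))).
  pose proof (Rabs_walk_le (fun y => v (Z.of_nat a) y 0%Z) M b
    (fun m Hm => proj1 (proj2 (Rabs_step_le_dirichlet v M _ _ _ HM HD HaN (HmN m j Hm Hj) H0N)))).
  pose proof (Rabs_walk_le (fun z => v (Z.of_nat a) (Z.of_nat b) z) M c
    (fun m Hm => proj2 (proj2 (Rabs_step_le_dirichlet v M _ _ _ HM HD HaN HbN (HmN m k Hm Hk))))).
  cbv beta in *. rewrite H0, Rminus_0_r in *.
  assert (INR a + INR b + INR c <= 3 * INR N)
    by (assert (INR a <= INR N) by (apply le_INR; unfold a; lia);
        assert (INR b <= INR N) by (apply le_INR; unfold b; lia);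
        assert (INR c <= INR N) by (apply le_INR; unfold c; lia); lra).
  set (va := v (Z.of_nat a) 0%Z 0%Z) in *.
  set (vab := v (Z.of_nat a) (Z.of_nat b) 0%Z) in *.
  replace (v (Z.of_nat a) (Z.of_nat b) (Z.of_nat c))
    with ((v (Z.of_nat a) (Z.of_nat b) (Z.of_nat c) - vab) + (vab - va) + va) by ring.
  eapply Rle_trans; [apply Rabs_triang|].
  eapply Rle_trans; [apply Rplus_le_compat_r, Rabs_triang|].
  nra.
Qed.

End Poincare.

End Dirichlet.

Lemma exists_infimum {A : Type} (P : A -> Prop) (f : A -> R) :
  (exists x, P x) -> (exists m0, forall x, P x -> m0 <= f x) ->
  exists m, (forall x, P x -> m <= f x) /\ forall d, 0 < d -> exists x, P x /\ f x < m + d.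
Proof.
  intros [x0 Hx0] [m0 Hm0].
  set (E := fun y => exists x, P x /\ y = - f x).
  destruct (completeness E) as [M [HM1 HM2]].
  - exists (- m0). intros y [x [Hx ->]]. pose proof (Hm0 x Hx). lra.
  - exists (- f x0), x0. auto.
  - exists (- M). split.
    + intros x Hx. pose proof (HM1 (- f x) (ex_intro _ x (conj Hx eq_refl))). lra.
    + intros d Hd. apply NNPP. intros Hno.
      assert (Hub : is_upper_bound E (M - d)).
      { intros y [x [Hx ->]]. destruct (Rle_lt_dec (- f x) (M - d)) as [|Hlt]; [assumption|].
        exfalso. apply Hno. exists x. split; [exact Hx | lra]. }
      pose proof (HM2 _ Hub). lra.
Qed.

Lemma ex_finite_lim_seq_of_dist_le (a e : nat -> R) :
  is_lim_seq e 0 -> (forall n q, Rabs (a n - a q) <= e n + e q) -> ex_finite_lim_seq a.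
Proof.
  intros He Hd. apply ex_lim_seq_cauchy_corr. intros eps.
  apply is_lim_seq_Reals in He. destruct (He (eps / 2) ltac:(destruct eps; simpl; lra)) as [n0 Hn0].
  exists n0. intros n q Hn Hq.
  pose proof (Hn0 n Hn) as A. pose proof (Hn0 q Hq) as B. unfold R_dist in A, B.
  rewrite Rminus_0_r in A, B. pose proof (Hd n q).
  pose proof (Rle_abs (e n)). pose proof (Rle_abs (e q)). lra.
Qed.

Lemma is_lim_seq_inv_succ : is_lim_seq (fun n => / INR (S n)) 0.
Proof.
  apply (is_lim_seq_incr_1 (fun n => / INR n)).
  replace (Finite 0) with (Rbar_inv p_infty) by reflexivity.
  apply is_lim_seq_inv; [apply is_lim_seq_INR | discriminate].
Qed.

Lemma exists_ln_below (a C : R) : 0 < a -> exists t, 0 < t <= 1 /\ C + a * ln (t * a) < 0.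
Proof.
  intros Ha. set (K := Rabs C + 1).
  exists (Rmin 1 (exp (- K / a) / a)). set (t := Rmin 1 (exp (- K / a) / a)).
  assert (Ht : 0 < t) by (apply Rmin_pos; [lra | apply Rdiv_lt_0_compat; [apply exp_pos | lra]]).
  assert (Hta : t * a <= exp (- K / a)).
  { assert (t <= exp (- K / a) / a) by apply Rmin_r.
    replace (exp (- K / a)) with (exp (- K / a) / a * a) by (field; lra).
    apply Rmult_le_compat_r; lra. }
  assert (Hln : ln (t * a) <= - K / a).
  { rewrite <- (ln_exp (- K / a)). apply ln_le; [nra | exact Hta]. }
  assert (a * ln (t * a) <= - K).
  { replace (- K) with (a * (- K / a)) by (field; lra). apply Rmult_le_compat_l; lra. }
  split; [split; [exact Ht | apply Rmin_l]|].
  pose proof (Rle_abs C). unfold K in *. lra.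
Qed.

Section Energy.
Variable N : nat.
Variables h e2 th tau : R.
Variable un : grid.
Hypothesis HN : (0 < N)%nat.
Hypothesis Hh : h <> 0.
Hypothesis He2 : 0 <= e2.
Hypothesis Htau : 0 < tau.
Hypothesis Hunp : periodic N un.
Hypothesis Hun : forall i j k, -1 < un i j k < 1.

Local Notation D := (dirichlet N h).

Definition u_of (w : grid) : grid := fun i j k => un i j k + tau * lap_h h w i j k.

Definition entropy_energy (w : grid) : R := csum N (fun i j k => entropy (u_of w i j k)).

Definition smooth_energy (w : grid) : R :=
  e2 / 2 * D (u_of w) (u_of w) - th * csum N (fun i j k => un i j k * u_of w i j k)
  + tau / 2 * D w w.

Definition energy (w : grid) : R := entropy_energy w + smooth_energy w.

Definition admissible (w : grid) : Prop :=
  periodic N w /\ forall i j k, -1 <= u_of w i j k <= 1.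

Definition potential (w : grid) : grid := fun i j k =>
  dentropy (u_of w i j k) - e2 * lap_h h (u_of w) i j k - th * un i j k.

Lemma periodic_u_of (w : grid) : periodic N w -> periodic N (u_of w).
Proof.
  intros Hw. apply (periodic_map2 N (fun x y => x + tau * y)); [exact Hunp | now apply periodic_lap].
Qed.

Lemma u_of_comb (t : R) (a b : grid) :
  u_of (comb t a b) = comb t (u_of a) (u_of b).
Proof.
  do 3 (apply functional_extensionality; intro). unfold u_of, comb, lap_h. ring.
Qed.

Lemma u_of_perturb (w psi : grid) (t : R) :
  u_of (perturb w psi t) = perturb (u_of w) (fun i j k => tau * lap_h h psi i j k) t.
Proof.
  do 3 (apply functional_extensionality; intro). unfold u_of, perturb, lap_h. ring.
Qed.

Lemma u_of_sub_const (w : grid) (c : R) : u_of (fun i j k => w i j k - c) = u_of w.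
Proof.
  do 3 (apply functional_extensionality; intro). unfold u_of, lap_h. field. exact Hh.
Qed.

Lemma admissible_zero : admissible (fun _ _ _ => 0).
Proof.
  split; [apply periodic_const|]. intros i j k. unfold u_of, lap_h.
  pose proof (Hun i j k). lra.
Qed.

Lemma admissible_comb (t : R) (a b : grid) :
  0 <= t <= 1 -> admissible a -> admissible b -> admissible (comb t a b).
Proof.
  intros Ht [Ha Ha'] [Hb Hb']. split; [now apply (periodic_map2 N (fun x y => (1 - t) * x + t * y))|].
  intros i j k. rewrite u_of_comb. unfold comb.
  pose proof (Ha' i j k). pose proof (Hb' i j k). nra.
Qed.

Lemma admissible_sub_const (w : grid) (c : R) :
  admissible w -> admissible (fun i j k => w i j k - c).
Proof.
  intros [Hw Hw']. split; [now apply (periodic_map1 N (fun x => x - c))|]. now rewrite u_of_sub_const.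
Qed.

Lemma energy_sub_const (w : grid) (c : R) : energy (fun i j k => w i j k - c) = energy w.
Proof.
  unfold energy, entropy_energy, smooth_energy. now rewrite u_of_sub_const, dirichlet_sub_const.
Qed.

Lemma entropy_energy_convex (t : R) (a b : grid) : 0 <= t <= 1 ->
  admissible a -> admissible b ->
  entropy_energy (comb t a b) <= (1 - t) * entropy_energy a + t * entropy_energy b.
Proof.
  intros Ht [_ Ha] [_ Hb]. unfold entropy_energy.
  rewrite <- !csum_scal, <- csum_plus. apply csum_le. intros i j k _ _ _.
  rewrite u_of_comb. apply entropy_convex; auto.
Qed.

Lemma smooth_energy_convex (t : R) (a b : grid) : 0 <= t <= 1 ->
  smooth_energy (comb t a b)
  <= (1 - t) * smooth_energy a + t * smooth_energy b - t * (1 - t) * (tau / 2) * D (gsub a b) (gsub a b).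
Proof.
  intros Ht. unfold smooth_energy. rewrite u_of_comb, !dirichlet_comb.
  rewrite (csum_ext N (fun i j k => un i j k * comb t (u_of a) (u_of b) i j k)
             (fun i j k => (1 - t) * (un i j k * u_of a i j k) + t * (un i j k * u_of b i j k)))
    by (intros; unfold comb; ring).
  rewrite csum_plus, !csum_scal.
  pose proof (dirichlet_nonneg N h Hh (gsub (u_of a) (u_of b))).
  assert (0 <= e2 / 2 * (t * (1 - t) * D (gsub (u_of a) (u_of b)) (gsub (u_of a) (u_of b))))
    by (apply Rmult_le_pos; [lra | apply Rmult_le_pos; [nra | lra]]).
  nra.
Qed.

Lemma energy_convex (t : R) (a b : grid) : 0 <= t <= 1 -> admissible a -> admissible b ->
  energy (comb t a b)
  <= (1 - t) * energy a + t * energy b - t * (1 - t) * (tau / 2) * D (gsub a b) (gsub a b).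
Proof.
  intros Ht Ha Hb. unfold energy.
  pose proof (entropy_energy_convex t a b Ht Ha Hb). pose proof (smooth_energy_convex t a b Ht).
  lra.
Qed.

Lemma energy_bounded_below : exists m0, forall w, admissible w -> m0 <= energy w.
Proof.
  set (C := csum N (fun _ _ _ => 1)).
  exists (- (Rabs th * C)). intros w [_ Hw]. unfold energy, entropy_energy, smooth_energy.
  set (S := csum N (fun i j k => un i j k * u_of w i j k)).
  assert (0 <= csum N (fun i j k => entropy (u_of w i j k)))
    by (apply csum_nonneg; intros; now apply entropy_nonneg).
  assert (HS : Rabs S <= C).
  { assert (Hp : forall i j k, -1 <= un i j k * u_of w i j k <= 1)
      by (intros i j k; pose proof (Hun i j k); pose proof (Hw i j k); split; nra).
    assert (HC : csum N (fun _ _ _ => -1) = - C)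
      by (unfold C; replace (- _) with (-1 * csum N (fun _ _ _ => 1)) by ring;
          rewrite <- csum_scal; apply csum_ext; intros; ring).
    apply Rabs_le. split.
    - rewrite <- HC. apply csum_le. intros; apply Hp.
    - apply csum_le. intros; apply Hp. }
  assert (th * S <= Rabs th * C).
  { pose proof (Rle_abs (th * S)). rewrite Rabs_mult in H0.
    pose proof (Rmult_le_compat_l (Rabs th) _ _ (Rabs_pos th) HS). lra. }
  pose proof (dirichlet_nonneg N h Hh (u_of w)). pose proof (dirichlet_nonneg N h Hh w).
  assert (0 <= e2 / 2 * D (u_of w) (u_of w)) by (apply Rmult_le_pos; lra).
  assert (0 <= tau / 2 * D w w) by (apply Rmult_le_pos; lra).
  lra.
Qed.

Lemma u_of_lim (ws : nat -> grid) (W : grid) :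
  (forall i j k, is_lim_seq (fun n => ws n i j k) (W i j k)) ->
  forall i j k, is_lim_seq (fun n => u_of (ws n) i j k) (u_of W i j k).
Proof.
  intros H i j k. apply is_lim_seq_plus'; [apply is_lim_seq_const|].
  apply (is_lim_seq_scal_l _ tau (lap_h h W i j k)), (is_lim_seq_scal_l _ _ (_ - _)).
  apply is_lim_seq_minus'; [repeat apply is_lim_seq_plus'; apply H|].
  apply (is_lim_seq_scal_l _ 6 (W i j k)), H.
Qed.

Lemma energy_lim (ws : nat -> grid) (W : grid) :
  (forall i j k, is_lim_seq (fun n => ws n i j k) (W i j k)) ->
  is_lim_seq (fun n => energy (ws n)) (energy W).
Proof.
  intros H.
  pose proof (u_of_lim ws W H) as Hu.
  assert (Hu' : forall i j k, is_lim_seq (fun n => un i j k * u_of (ws n) i j k)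
                                         (un i j k * u_of W i j k))
    by (intros; apply (is_lim_seq_scal_l _ _ (u_of W i j k)), Hu).
  apply is_lim_seq_plus'; [|apply is_lim_seq_plus'; [apply is_lim_seq_minus'|]].
  - apply csum_lim. intros i j k. apply is_lim_seq_continuous; [apply entropy_continuous | apply Hu].
  - apply (is_lim_seq_scal_l _ _ (D (u_of W) (u_of W))), dirichlet_lim, Hu.
  - apply (is_lim_seq_scal_l _ _ (csum N _)), csum_lim, Hu'.
  - apply (is_lim_seq_scal_l _ _ (D W W)), dirichlet_lim, H.
Qed.

Lemma admissible_lim (ws : nat -> grid) (W : grid) :
  (forall i j k, is_lim_seq (fun n => ws n i j k) (W i j k)) ->
  (forall n, admissible (ws n)) -> admissible W.
Proof.
  intros H Hws.
  assert (Huniq : forall (u v : nat -> R) (a b : R), is_lim_seq u a -> is_lim_seq v b ->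
                    (forall n, u n = v n) -> a = b).
  { intros u v a b Ha Hb E. apply (is_lim_seq_ext u v) in Ha; [|exact E].
    apply is_lim_seq_unique in Ha, Hb. rewrite Ha in Hb. now injection Hb. }
  split.
  - intros i j k. repeat split; eapply Huniq; try apply H; intros n; apply (proj1 (Hws n)).
  - intros i j k. pose proof (u_of_lim ws W H i j k) as Hu. split.
    + change (Rbar_le (-1) (u_of W i j k)).
      apply (is_lim_seq_le (fun _ => -1) (fun n => u_of (ws n) i j k));
        [intros n; apply (proj2 (Hws n)) | apply is_lim_seq_const | exact Hu].
    + change (Rbar_le (u_of W i j k) 1).
      apply (is_lim_seq_le (fun n => u_of (ws n) i j k) (fun _ => 1));
        [intros n; apply (proj2 (Hws n)) | exact Hu | apply is_lim_seq_const].
Qed.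

Lemma dirichlet_gsub_le_near_inf (m da db : R) (a b : grid) :
  (forall v, admissible v -> m <= energy v) -> admissible a -> admissible b ->
  energy a <= m + da -> energy b <= m + db -> tau * D (gsub a b) (gsub a b) <= 4 * (da + db).
Proof.
  intros Hm Ha Hb Hea Heb.
  pose proof (energy_convex (1 / 2) a b ltac:(lra) Ha Hb).
  pose proof (Hm _ (admissible_comb (1 / 2) a b ltac:(lra) Ha Hb)). lra.
Qed.

(* The tolerance [tau / (4 h^2) / (n+1)^2] is chosen so that, by strong
   convexity, [h^2 D (ws n - ws q)] is at most [(1/(n+1) + 1/(q+1))^2]. *)
Lemma energy_minimizing_sequence : exists (m : R) (ws : nat -> grid),
  (forall v, admissible v -> m <= energy v) /\
  forall n, admissible (ws n) /\ ws n 0%Z 0%Z 0%Z = 0 /\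
    energy (ws n) <= m + tau / (4 * h ^ 2) * (/ INR (S n)) ^ 2.
Proof.
  destruct (exists_infimum admissible energy (ex_intro _ _ admissible_zero) energy_bounded_below)
    as [m [Hm Hd]].
  assert (Hc : 0 < tau / (4 * h ^ 2)) by (pose proof (sqr_h_pos h Hh); apply Rdiv_lt_0_compat; lra).
  destruct (choice (fun n w => admissible w /\ energy w < m + tau / (4 * h ^ 2) * (/ INR (S n)) ^ 2))
    as [vs Hvs].
  { intros n. apply Hd. apply Rmult_lt_0_compat; [exact Hc|].
    apply pow_lt, Rinv_0_lt_compat, lt_0_INR. lia. }
  exists m, (fun n i j k => vs n i j k - vs n 0%Z 0%Z 0%Z). split; [exact Hm|].
  intros n. destruct (Hvs n) as [Ha He]. split; [|split].
  - now apply admissible_sub_const.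
  - ring.
  - rewrite energy_sub_const. lra.
Qed.

Lemma minimizing_sequence_dist_le (m : R) (ws : nat -> grid) :
  (forall v, admissible v -> m <= energy v) ->
  (forall n, admissible (ws n) /\ ws n 0%Z 0%Z 0%Z = 0 /\
     energy (ws n) <= m + tau / (4 * h ^ 2) * (/ INR (S n)) ^ 2) ->
  forall n q i j k, Rabs (ws n i j k - ws q i j k)
                    <= 3 * INR N * / INR (S n) + 3 * INR N * / INR (S q).
Proof.
  intros Hm Hws n q i j k.
  destruct (Hws n) as (Hn & Hn0 & Hen). destruct (Hws q) as (Hq & Hq0 & Heq).
  pose proof (dirichlet_gsub_le_near_inf m _ _ (ws n) (ws q) Hm Hn Hq Hen Heq) as HD.
  set (dn := / INR (S n)) in *. set (dq := / INR (S q)) in *.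
  assert (Hdn : 0 < dn) by (apply Rinv_0_lt_compat, lt_0_INR; lia).
  assert (Hdq : 0 < dq) by (apply Rinv_0_lt_compat, lt_0_INR; lia).
  pose proof (sqr_h_pos h Hh) as Hh2.
  assert (HD' : h ^ 2 * D (gsub (ws n) (ws q)) (gsub (ws n) (ws q)) <= (dn + dq) ^ 2).
  { apply (Rmult_le_reg_l tau); [exact Htau|].
    replace (tau * (h ^ 2 * D (gsub (ws n) (ws q)) (gsub (ws n) (ws q))))
      with (h ^ 2 * (tau * D (gsub (ws n) (ws q)) (gsub (ws n) (ws q)))) by ring.
    eapply Rle_trans; [apply Rmult_le_compat_l; [lra | exact HD]|].
    replace (h ^ 2 * (4 * (tau / (4 * h ^ 2) * dn ^ 2 + tau / (4 * h ^ 2) * dq ^ 2)))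
      with (tau * (dn ^ 2 + dq ^ 2)) by (field; lra).
    apply Rmult_le_compat_l; nra. }
  pose proof (Rabs_le_dirichlet N h Hh HN (gsub (ws n) (ws q)) (dn + dq)
                (periodic_map2 N Rminus _ _ (proj1 Hn) (proj1 Hq))
                ltac:(unfold gsub; rewrite Hn0, Hq0; ring) ltac:(lra) HD' i j k) as B.
  unfold gsub in B. lra.
Qed.

Lemma energy_has_minimizer : exists W, admissible W /\ forall v, admissible v -> energy W <= energy v.
Proof.
  destruct energy_minimizing_sequence as (m & ws & Hm & Hws).
  pose proof (minimizing_sequence_dist_le m ws Hm Hws) as Hdist.
  assert (He : is_lim_seq (fun n => 3 * INR N * / INR (S n)) 0).
  { replace (Finite 0) with (Rbar_mult (3 * INR N) 0) by (simpl; f_equal; ring).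
    apply is_lim_seq_scal_l, is_lim_seq_inv_succ. }
  set (W := fun i j k => real (Lim_seq (fun n => ws n i j k))).
  assert (HW : forall i j k, is_lim_seq (fun n => ws n i j k) (W i j k)).
  { intros i j k. apply Lim_seq_correct'.
    apply (ex_finite_lim_seq_of_dist_le _ _ He). intros n q. apply Hdist. }
  assert (HWa : admissible W) by (apply (admissible_lim ws W HW); intros n; apply Hws).
  exists W. split; [exact HWa|]. intros v Hv.
  assert (Hlim : is_lim_seq (fun n => m + tau / (4 * h ^ 2) * (/ INR (S n)) ^ 2)
                            (m + tau / (4 * h ^ 2) * 0 ^ 2)).
  { apply (is_lim_seq_continuous (fun x => m + tau / (4 * h ^ 2) * x ^ 2));
      [reg | apply is_lim_seq_inv_succ]. }
  rewrite pow_i, Rmult_0_r, Rplus_0_r in Hlim by lia.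
  pose proof (is_lim_seq_le _ _ _ _ (fun n => proj2 (proj2 (Hws n))) (energy_lim ws W HW) Hlim).
  simpl in H. pose proof (Hm v Hv). lra.
Qed.

Lemma u_of_zero : u_of (fun _ _ _ => 0) = un.
Proof. do 3 (apply functional_extensionality; intro). unfold u_of, lap_h. ring. Qed.

Lemma energy_chord_at_boundary (W : grid) (i0 j0 k0 : Z) :
  admissible W -> in_cell N i0 -> in_cell N j0 -> in_cell N k0 ->
  (u_of W i0 j0 k0 = -1 \/ u_of W i0 j0 k0 = 1) ->
  exists a K, 0 < a /\ forall t, 0 < t <= 1 ->
    energy (comb t W (fun _ _ _ => 0))
    <= (1 - t) * energy W + t * energy (fun _ _ _ => 0) + t * (a * ln (t * a) + K).
Proof.
  intros [_ HW] Hi Hj Hk Hs.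
  destruct (entropy_chord_at_boundary _ _ Hs (Hun i0 j0 k0)) as (a & K & Ha & HK).
  exists a, K. split; [exact Ha|]. intros t Ht.
  assert (Hent : entropy_energy (comb t W (fun _ _ _ => 0))
                 <= (1 - t) * entropy_energy W + t * entropy_energy (fun _ _ _ => 0)
                    + t * (a * ln (t * a) + K)).
  { unfold entropy_energy. rewrite <- !csum_scal, <- csum_plus, u_of_comb, u_of_zero.
    apply (csum_le_add_term N _ _ i0 j0 k0); auto; unfold comb.
    - intros i j k _ _ _. apply entropy_convex; [apply HW | split; apply Rlt_le, Hun | lra].
    - apply HK, Ht. }
  pose proof (smooth_energy_convex t W (fun _ _ _ => 0) ltac:(lra)).
  pose proof (dirichlet_nonneg N h Hh (gsub W (fun _ _ _ => 0))).
  assert (0 <= t * (1 - t) * (tau / 2) * D (gsub W (fun _ _ _ => 0)) (gsub W (fun _ _ _ => 0)))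
    by (apply Rmult_le_pos; [apply Rmult_le_pos; nra | lra]).
  unfold energy. lra.
Qed.

(* At a point where [u = +-1] the entropy has slope [-oo] towards the interior,
   so moving slightly towards the admissible grid [0] (where [u = un]) would
   lower the energy. *)
Lemma minimizer_interior (W : grid) :
  admissible W -> (forall v, admissible v -> energy W <= energy v) ->
  forall i j k, -1 < u_of W i j k < 1.
Proof.
  intros HW Hmin.
  apply (periodic_forall_of_cell N HN (fun x => -1 < x < 1) _ (periodic_u_of W (proj1 HW))).
  intros i j k Hi Hj Hk.
  assert (Hb : ~ (u_of W i j k = -1 \/ u_of W i j k = 1)).
  { intros Hs.
    destruct (energy_chord_at_boundary W i j k HW Hi Hj Hk Hs) as (a & K & Ha & HK).
    destruct (exists_ln_below a (energy (fun _ _ _ => 0) - energy W + K) Ha) as (t & Ht & Hneg).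
    pose proof (HK t Ht).
    pose proof (Hmin _ (admissible_comb t W _ ltac:(lra) HW admissible_zero)).
    pose proof (Rmult_lt_compat_l t _ _ (proj1 Ht) Hneg). lra. }
  destruct (proj2 HW i j k) as [Hlo Hhi]. split.
  - destruct (Rle_lt_or_eq_dec _ _ Hlo) as [|E]; [assumption|]. exfalso. apply Hb. now left.
  - destruct (Rle_lt_or_eq_dec _ _ Hhi) as [|E]; [assumption|]. exfalso. apply Hb. now right.
Qed.

Lemma periodic_potential (W : grid) : periodic N W -> periodic N (potential W).
Proof.
  intros HW. pose proof (periodic_u_of W HW) as Hu.
  apply (periodic_map2 N (fun x y => x - th * y)); [|exact Hunp].
  apply (periodic_map2 N (fun x y => dentropy x - e2 * y)); [exact Hu | now apply periodic_lap].
Qed.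

Lemma interior_perturb_admissible (W psi : grid) :
  periodic N W -> (forall i j k, -1 < u_of W i j k < 1) -> periodic N psi ->
  exists r, 0 < r /\ forall t, Rabs t < r -> admissible (perturb W psi t).
Proof.
  intros HW Hint Hpsi.
  destruct (periodic_bounded N HN (fun i j k => tau * lap_h h psi i j k)) as (B & HB & Hq).
  { apply (periodic_map1 N (fun x => tau * x)). now apply periodic_lap. }
  destruct (periodic_bounded N HN (fun i j k => / (1 - Rabs (u_of W i j k)))) as (B' & HB' & Hm).
  { apply (periodic_map1 N (fun x => / (1 - Rabs x))). now apply periodic_u_of. }
  exists (/ (B * B')). split; [apply Rinv_0_lt_compat; nra|].
  intros t Ht. split; [apply (periodic_map2 N (fun x y => x + t * y)); assumption|].
  intros i j k. rewrite u_of_perturb. unfold perturb.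
  set (x := u_of W i j k) in *. set (q := tau * lap_h h psi i j k) in *.
  assert (Hx : Rabs x < 1) by (apply Rabs_def1; apply Hint).
  assert (Hmargin : / B' <= 1 - Rabs x).
  { rewrite <- (Rinv_inv (1 - Rabs x)). apply Rinv_le_contravar.
    - apply Rinv_0_lt_compat. lra.
    - eapply Rle_trans; [apply Rle_abs | apply Hm]. }
  assert (Htq : Rabs (t * q) < / B').
  { rewrite Rabs_mult. replace (/ B') with (/ (B * B') * B) by (field; lra).
    pose proof (Rabs_pos t). pose proof (Rabs_pos q).
    assert (Rabs q <= B) by apply Hq. nra. }
  pose proof (Rabs_triang x (t * q)).
  assert (Hle : Rabs (x + t * q) <= 1) by lra.
  pose proof (Rle_abs (x + t * q)). pose proof (Rle_abs (- (x + t * q))).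
  rewrite Rabs_Ropp in *. lra.
Qed.

Lemma first_variation_eq (W psi : grid) : periodic N W -> periodic N psi ->
  let u := u_of W in let q := fun i j k => tau * lap_h h psi i j k in
  csum N (fun i j k => dentropy (u i j k) * q i j k)
  + (e2 * D u q - th * csum N (fun i j k => un i j k * q i j k) + tau * D W psi)
  = tau * csum N (fun i j k => psi i j k * (lap_h h (potential W) i j k - lap_h h W i j k)).
Proof.
  intros HW Hpsi u q.
  assert (Hu : periodic N u) by now apply periodic_u_of.
  assert (Hq : periodic N q) by (apply (periodic_map1 N (fun x => tau * x)); now apply periodic_lap).
  rewrite (dirichlet_sym N h u q), (dirichlet_sym N h W psi).
  rewrite (green_formula N h Hh q u Hq Hu), (green_formula N h Hh psi W Hpsi HW).
  rewrite (csum_ext N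
             (fun i j k => psi i j k * (lap_h h (potential W) i j k - lap_h h W i j k))
             (fun i j k => psi i j k * lap_h h (potential W) i j k - psi i j k * lap_h h W i j k))
    by (intros; ring).
  rewrite csum_minus, (csum_mul_lap_sym N h Hh psi (potential W) Hpsi (periodic_potential W HW)).
  assert (Eg : csum N (fun i j k => q i j k * potential W i j k)
               = csum N (fun i j k => dentropy (u i j k) * q i j k)
                 - e2 * csum N (fun i j k => q i j k * lap_h h u i j k)
                 - th * csum N (fun i j k => un i j k * q i j k)).
  { rewrite <- !csum_scal, <- !csum_minus. apply csum_ext; intros. unfold potential. fold u. ring. }
  assert (Eq : csum N (fun i j k => q i j k * potential W i j k)
               = tau * csum N (fun i j k => lap_h h psi i j k * potential W i j k))
    by (rewrite <- csum_scal; apply csum_ext; intros; unfold q; ring).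
  lra.
Qed.

Lemma smooth_energy_perturb (W psi : grid) (t : R) :
  let u := u_of W in let q := fun i j k => tau * lap_h h psi i j k in
  smooth_energy (perturb W psi t)
  = smooth_energy W
    + t * (e2 * D u q - th * csum N (fun i j k => un i j k * q i j k) + tau * D W psi)
    + t ^ 2 * (e2 / 2 * D q q + tau / 2 * D psi psi).
Proof.
  intros u q. unfold smooth_energy. rewrite u_of_perturb. fold u q.
  rewrite !dirichlet_perturb.
  rewrite (csum_ext N (fun i j k => un i j k * perturb u q t i j k)
             (fun i j k => un i j k * u i j k + t * (un i j k * q i j k)))
    by (intros; unfold perturb; ring).
  rewrite csum_plus, csum_scal. field.
Qed.

Lemma energy_perturb_derivative (W psi : grid) :
  periodic N W -> (forall i j k, -1 < u_of W i j k < 1) -> periodic N psi ->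
  derivable_pt_lim (fun t => energy (perturb W psi t)) 0
    (tau * csum N (fun i j k => psi i j k * (lap_h h (potential W) i j k - lap_h h W i j k))).
Proof.
  intros HW Hint Hpsi. rewrite <- (first_variation_eq W psi HW Hpsi).
  set (u := u_of W). set (q := fun i j k => tau * lap_h h psi i j k).
  set (S1 := e2 * D u q - th * csum N (fun i j k => un i j k * q i j k) + tau * D W psi).
  set (S2 := e2 / 2 * D q q + tau / 2 * D psi psi).
  replace (fun t => energy (perturb W psi t)) with (fun t =>
    csum N (fun i j k => entropy (u i j k + t * q i j k)) + (smooth_energy W + t * S1 + t ^ 2 * S2)).
  2: { apply functional_extensionality. intros t. unfold energy, entropy_energy.
       rewrite smooth_energy_perturb, u_of_perturb. reflexivity. }
  apply derivable_pt_lim_plus.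
  - apply (csum_derivative N (fun i j k t => entropy (u i j k + t * q i j k))).
    intros i j k. apply entropy_derivative, Hint.
  - apply is_derive_Reals. auto_derive; [exact I | unfold S1, q; ring].
Qed.

Lemma perturb_0 (w psi : grid) : perturb w psi 0 = w.
Proof. do 3 (apply functional_extensionality; intro). unfold perturb. ring. Qed.

(* Testing the minimality of [W] against the direction
   [psi = lap_h (potential W) - lap_h W] gives [tau * sum psi^2 = 0]. *)
Lemma minimizer_euler_lagrange (W : grid) :
  admissible W -> (forall v, admissible v -> energy W <= energy v) ->
  forall i j k, lap_h h (potential W) i j k = lap_h h W i j k.
Proof.
  intros HW Hmin.
  pose proof (minimizer_interior W HW Hmin) as Hint.
  set (psi := fun i j k => lap_h h (potential W) i j k - lap_h h W i j k).
  assert (Hpsi : periodic N psi)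
    by (apply periodic_map2; apply periodic_lap; [apply periodic_potential|]; apply HW).
  destruct (interior_perturb_admissible W psi (proj1 HW) Hint Hpsi) as (r & Hr & Hadm).
  pose proof (energy_perturb_derivative W psi (proj1 HW) Hint Hpsi) as Hder.
  change (derivable_pt_lim (fun t => energy (perturb W psi t)) 0
            (tau * csum N (fun i j k => psi i j k * psi i j k))) in Hder.
  assert (Hzero : tau * csum N (fun i j k => psi i j k * psi i j k) = 0).
  { rewrite <- (derive_pt_eq_0 _ _ _ (exist _ _ Hder) Hder).
    apply (deriv_minimum _ (- r) r); [lra | lra |].
    intros t Ht1 Ht2. rewrite perturb_0. apply Hmin, Hadm, Rabs_def1; lra. }
  assert (Hsq : csum N (fun i j k => psi i j k * psi i j k) = 0).
  { apply Rmult_integral in Hzero. destruct Hzero; [lra | assumption]. }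
  intros i j k. apply Rminus_diag_uniq.
  apply (periodic_forall_of_cell N HN (fun x => x = 0) psi Hpsi). intros i' j' k' Hi Hj Hk.
  pose proof (csum_term_le N (fun i j k => psi i j k * psi i j k) i' j' k'
                ltac:(intros; apply Rle_0_sqr) Hi Hj Hk).
  nra.
Qed.

Lemma reduced_system_solvable : exists u w : grid,
  periodic N u /\ periodic N w /\ (forall i j k, -1 < u i j k < 1) /\
  forall i j k, tau * lap_h h w i j k = u i j k - un i j k /\
    dentropy (u i j k) - e2 * lap_h h u i j k - th * un i j k = w i j k.
Proof.
  destruct energy_has_minimizer as (W & HW & Hmin).
  exists (u_of W), (potential W).
  split; [now apply periodic_u_of, HW|].
  split; [now apply periodic_potential, HW|].
  split; [exact (minimizer_interior W HW Hmin)|].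
  intros i j k. split; [|reflexivity].
  rewrite (minimizer_euler_lagrange W HW Hmin). unfold u_of. ring.
Qed.

End Energy.

Theorem mainTheorem1 (L : R) (N : nat) (eps theta0 tau alpha : R) (un : grid) :
  0 < L -> (0 < N)%nat ->
  0 < eps -> 0 < theta0 -> 0 < tau -> 0 < alpha < 1 ->
  periodic N un -> (forall i j k : Z, -1 < un i j k < 1) ->
  let h := L / INR N in
  exists u1 w1 u2 w2 u3 w3 : grid,
    periodic N u1 /\ periodic N w1 /\ periodic N u2 /\
    periodic N w2 /\ periodic N u3 /\ periodic N w3 /\
    (forall i j k : Z, -1 < u2 i j k < 1) /\
    (forall i j k : Z,
       - eps ^ 2 * lap_h h u1 i j k - alpha * w1 i j k + u3 i j k = 0 /\
       alpha * (- u1 i j k + un i j k) + tau * lap_h h w1 i j k - w3 i j k = 0 /\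
       ln (1 + u2 i j k) - ln (1 - u2 i j k) - theta0 * un i j k
         - (1 - alpha) * w2 i j k - u3 i j k = 0 /\
       (1 - alpha) * (- u2 i j k + un i j k) + w3 i j k = 0 /\
       u1 i j k - u2 i j k = 0 /\
       w1 i j k - w2 i j k = 0).
Proof.
  intros HL HN Heps Hth Htau Hal Hunp Hun h.
  assert (Hh : h <> 0) by (apply Rgt_not_eq, Rdiv_lt_0_compat; [exact HL | now apply lt_0_INR]).
  destruct (reduced_system_solvable N h (eps ^ 2) theta0 tau un HN Hh (pow2_ge_0 eps) Htau Hunp Hun)
    as (u & w & Hu & Hw & Hint & Hsys).
  exists u, w, u, w, (fun i j k => eps ^ 2 * lap_h h u i j k + alpha * w i j k),
    (fun i j k => (1 - alpha) * (u i j k - un i j k)).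
  do 4 (split; [assumption|]).
  split; [apply (periodic_map2 N (fun x y => eps ^ 2 * x + alpha * y)); [now apply periodic_lap | exact Hw]|].
  split; [apply (periodic_map2 N (fun x y => (1 - alpha) * (x - y))); assumption|].
  split; [exact Hint|].
  intros i j k. destruct (Hsys i j k) as [Hlap Hpot]. unfold dentropy in Hpot.
  repeat split; lra.
Qed.
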